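(* Let $n,m,d_j\in\mathbb{Z}_+$, $j=0,1,\dots,2k$, satisfy $d_0=n$, $d_{2k}=m\ge 2n+1$, and $d_j\ge 2n+1$ for all even $j\ge 2$. Let $$F_k=B_k\circ f^{(k)}_\theta\circ B_{k-1}\circ f^{(k-1)}_\theta\circ\cdots\circ B_1\circ f^{(1)}_\theta,$$ where each $f^{(j)}_\theta:\mathbb{R}^{d_{2j-2}}\to\mathbb{R}^{d_{2j-1}}$ is an injective neural network and $B_j\in\mathbb{R}^{d_{2j}\times d_{2j-1}}$ are random matrices whose joint distribution is absolutely continuous with respect to Lebesgue measure on $\prod_{j=1}^k\mathbb{R}^{d_{2j}\times d_{2j-1}}$. Then $F_k:\mathbb{R}^n\to\mathbb{R}^m$ is injective almost surely.
   Context: Neural networks here are ReLU networks $z\mapsto W_{L+1}\phi_L(W_L\cdots\phi_1(W_1z+b_1)\cdots+b_L)$ with weight matrices $W_\ell$, biases $b_\ell$ and $\phi_\ell=\operatorname{ReLU}$ applied componentwise (arbitrary depth and widths). *)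

From HB Require Import structures.
From mathcomp Require Import all_boot all_order all_algebra.
From mathcomp Require Import all_classical all_reals all_analysis.
Set Implicit Arguments. Unset Strict Implicit. Unset Printing Implicit Defensive.
Import Order.TTheory GRing.Theory Num.Theory.
Local Open Scope ring_scope.
Local Open Scope classical_set_scope.

Definition relu_vec (R : realType) (h : nat) (v : 'cV[R]_h) : 'cV[R]_h :=
  map_mx (fun x => Num.max x 0) v.

(* A ReLU network R^a -> R^b:  z |-> W_{L+1} phi(W_L ... phi(W_1 z + b_1) ... + b_L),
   arbitrary depth L >= 0 and widths. *)
Inductive relu_net (R : realType) : nat -> nat -> Type :=
| NetOut (a b : nat) : 'M[R]_(b, a) -> relu_net R a b
| NetLayer (a h b : nat) : 'M[R]_(h, a) -> 'cV[R]_h -> relu_net R h b -> relu_net R a b.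

Fixpoint net_eval (R : realType) (a b : nat) (N : relu_net R a b) : 'cV[R]_a -> 'cV[R]_b :=
  match N in relu_net _ a b return 'cV[R]_a -> 'cV[R]_b with
  | NetOut _ _ W => fun z => W *m z
  | NetLayer _ _ _ W bias N' => fun z => net_eval N' (relu_vec (W *m z + bias))
  end.

Definition is_relu_net (R : realType) (a b : nat) (f : 'cV[R]_a -> 'cV[R]_b) : Prop :=
  exists N : relu_net R a b, forall z, f z = net_eval N z.

Definition mxfam (R : realType) (k : nat) (rows cols : 'I_k -> nat) :=
  forall i : 'I_k, 'M[R]_(rows i, cols i).

Definition box_vol (R : realType) k (rows cols : 'I_k -> nat)
    (lo hi : mxfam R rows cols) : R :=
  \prod_(i < k) \prod_(r < rows i) \prod_(c < cols i) (hi i r c - lo i r c).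

(* Lebesgue-null subsets of the parameter space: outer Lebesgue measure zero,
   i.e. coverable by countably many boxes of arbitrarily small total volume. *)
Definition lebesgue_null (R : realType) k (rows cols : 'I_k -> nat)
    (A : set (mxfam R rows cols)) : Prop :=
  forall eps : R, 0 < eps ->
    exists lo hi : nat -> mxfam R rows cols,
      [/\ (forall n i r c, lo n i r c <= hi n i r c),
          (forall x, A x -> exists n, forall i r c,
              lo n i r c <= x i r c <= hi n i r c) &
          (forall M, \sum_(n < M) box_vol (lo n) (hi n) < eps)].

(* F_k = B_k o f^(k) o ... o B_1 o f^(1), with layer index j = i+1 for i : 'I_k;
   dims d (2j) = d (i.*2) etc. comp i _ is the partial composition of the first i blocks. *)
Fixpoint comp_blocks (R : realType) (k : nat) (d : nat -> nat)
    (f : forall i : 'I_k, 'cV[R]_(d (i.*2)) -> 'cV[R]_(d (i.*2).+1))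
    (B : forall i : 'I_k, 'M[R]_(d (i.+1).*2, d (i.*2).+1))
    (i : nat) : (i <= k)%N -> 'cV[R]_(d 0) -> 'cV[R]_(d (i.*2)) :=
  match i return (i <= k)%N -> 'cV[R]_(d 0) -> 'cV[R]_(d (i.*2)) with
  | 0 => fun _ z => z
  | i'.+1 => fun h z =>
      B (Ordinal h) *m f (Ordinal h) (comp_blocks f B (ltnW h) z)
  end.

Definition Fk (R : realType) (k : nat) (d : nat -> nat)
    (f : forall i : 'I_k, 'cV[R]_(d (i.*2)) -> 'cV[R]_(d (i.*2).+1))
    (B : forall i : 'I_k, 'M[R]_(d (i.+1).*2, d (i.*2).+1)) :
    'cV[R]_(d 0) -> 'cV[R]_(d (k.*2)) :=
  comp_blocks f B (leqnn k).

From HB Require Import structures.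
From mathcomp Require Import all_boot all_order all_algebra.
From mathcomp Require Import all_classical all_reals all_analysis.
From mathcomp Require Import ring lra.
Import Order.TTheory GRing.Theory Num.Theory.
Set Implicit Arguments. Unset Strict Implicit. Unset Printing Implicit Defensive.
Local Open Scope ring_scope.
Local Open Scope classical_set_scope.

(* If F_k x = F_k y with x <> y, let i0 be the first block at which the two inputs
   of f^(i0) differ but the outputs of B_i0 agree: u := f^(i0) w_x - f^(i0) w_y is
   nonzero by injectivity and B_i0 u = 0.  Choosing c0 with u_c0 <> 0, the column c0
   of B_i0 is determined by the other entries of the B_j and by (x, y) in R^(2n), and
   since ReLU networks are Lipschitz it depends on them in a locally Lipschitz way.
   On the piece where all these data are bounded by rho and |u_c0| >= 1/rho the bad
   parameters are therefore a Lipschitz image of a bounded set with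
   d_(2 i0 + 2) - 2n > 0 fewer coordinates than the parameter space, which a grid
   argument covers by boxes of arbitrarily small total volume.  Countably many pieces
   cover the set of parameters for which F_k is not injective. *)

Section ConcatStream.
Variables (T : Type) (x0 : T) (L : nat -> seq T).

Definition concat_prefix M := flatten (mkseq L M).

(* The n-th term of L 0 ++ L 1 ++ ...; when no L m is empty, [concat_prefix n.+1]
   has more than n terms. *)
Definition concat_stream n := nth x0 (concat_prefix n.+1) n.

Lemma concat_prefixS M : concat_prefix M.+1 = concat_prefix M ++ L M.
Proof. by rewrite /concat_prefix mkseqS -cats1 flatten_cat /= cats0. Qed.

Lemma concat_prefix_leq M N : (M <= N)%N ->
  exists s, concat_prefix N = concat_prefix M ++ s.
Proof.
move=> /subnK <-; elim: (N - M)%N => [|P [s IH]]; first by exists [::]; rewrite cats0.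
by exists (s ++ L (P + M)); rewrite addSn concat_prefixS IH catA.
Qed.

Lemma concat_stream_ind (Q : T -> Prop) :
  Q x0 -> (forall m p, Q (nth x0 (L m) p)) -> forall n, Q (concat_stream n).
Proof.
move=> Q0 QL n; rewrite /concat_stream /concat_prefix nth_flatten /=.
set r := reshape_index _ _; set o := reshape_offset _ _.
have [r_lt|r_ge] := ltnP r (size (mkseq L n.+1)).
  by rewrite nth_mkseq -1?(size_mkseq L n.+1).
by rewrite (nth_default _ r_ge) nth_nil.
Qed.

Hypothesis L_neq0 : forall m, (0 < size (L m))%N.

Lemma size_concat_prefix M : (M <= size (concat_prefix M))%N.
Proof.
elim: M => [|M IH] //; rewrite concat_prefixS size_cat -addn1.
exact: leq_add.
Qed.

Lemma nth_concat_stream M n : (n < size (concat_prefix M))%N ->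
  concat_stream n = nth x0 (concat_prefix M) n.
Proof.
move=> n_lt.
have nth_prefix N : (N <= maxn M n.+1)%N -> (n < size (concat_prefix N))%N ->
    nth x0 (concat_prefix N) n = nth x0 (concat_prefix (maxn M n.+1)) n.
  by move=> /concat_prefix_leq [s ->] n_lt'; rewrite nth_cat n_lt'.
rewrite /concat_stream nth_prefix ?leq_maxr ?(leq_trans _ (size_concat_prefix _)) //.
by rewrite nth_prefix ?leq_maxl.
Qed.

Lemma concat_stream_onto m p : (p < size (L m))%N ->
  exists n, concat_stream n = nth x0 (L m) p.
Proof.
move=> p_lt; exists (size (concat_prefix m) + p)%N.
rewrite (@nth_concat_stream m.+1) concat_prefixS ?size_cat ?ltn_add2l //.
by rewrite nth_cat ltnNge leq_addr /= addKn.
Qed.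

End ConcatStream.

Section BoxNull.
Variables (R : realType) (I : finType).
Local Notation box := ((I -> R) * (I -> R))%type.

Definition box_volume (b : box) : R := \prod_t (b.2 t - b.1 t).
Definition in_box (b : box) (x : I -> R) := forall t, b.1 t <= x t <= b.2 t.
Definition proper_box (b : box) := forall t, b.1 t <= b.2 t.

Definition finite_null (S : set (I -> R)) :=
  forall eps : R, 0 < eps -> exists (J : finType) (b : J -> box),
    [/\ forall j, proper_box (b j), forall x, S x -> exists j, in_box (b j) x &
        \sum_j box_volume (b j) < eps].

Definition null_set (S : set (I -> R)) :=
  forall eps : R, 0 < eps -> exists b : nat -> box,
    [/\ forall n, proper_box (b n), forall x, S x -> exists n, in_box (b n) x &
        forall M, \sum_(n < M) box_volume (b n) < eps].

Lemma box_volume_ge0 b : proper_box b -> 0 <= box_volume b.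
Proof. by move=> bP; apply: prodr_ge0 => t _; rewrite subr_ge0. Qed.

Definition zero_box : box := (0, 0).

Lemma proper_zero_box : proper_box zero_box.
Proof. by move=> t; rewrite lexx. Qed.

Lemma finite_null0 : finite_null set0.
Proof.
move=> eps eps_gt0; exists 'I_0, (fun _ => zero_box).
by split=> [_|//|]; [exact: proper_zero_box | rewrite big_ord0].
Qed.

Hypothesis I_gt0 : (0 < #|I|)%N.

Lemma box_volume_zero : box_volume zero_box = 0.
Proof.
by have [t _] := card_gt0P I_gt0; rewrite /box_volume (bigD1 t) //= subrr mul0r.
Qed.

Lemma finite_null_seq S eps : finite_null S -> 0 < eps ->
  exists L : seq box, [/\ (0 < size L)%N, forall p, proper_box (nth zero_box L p),
    forall x, S x -> exists2 p, (p < size L)%N & in_box (nth zero_box L p) x &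
    \sum_(b <- L) box_volume b < eps].
Proof.
move=> /[apply] -[J [b [bP Scov Svol]]].
exists (zero_box :: [seq b j | j <- enum J]); split => //.
- have sP q : proper_box (nth zero_box [seq b j | j <- enum J] q).
    have [q_lt|q_ge] := ltnP q (size (enum J)).
      by move: q_lt; case: (enum J) => // j0 s q_lt; rewrite (nth_map j0).
    by rewrite nth_default // size_map; exact: q_ge.
  by case=> [|p] /=; [exact: proper_zero_box | exact: sP].
- move=> x /Scov [j xj]; exists (index j (enum J)).+1.
    by rewrite /= size_map ltnS index_mem mem_enum.
  by rewrite /= (nth_map j) ?index_mem ?mem_enum // nth_index ?mem_enum.
- by rewrite big_cons box_volume_zero add0r big_map big_enum.
Qed.

Lemma null_set_bigcup_nat (S : nat -> set (I -> R)) :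
  (forall m, finite_null (S m)) -> null_set (\bigcup_m S m).
Proof.
move=> S_null eps eps_gt0.
pose em m := eps / 2 ^+ m.+1.
have em_gt0 m : 0 < em m by rewrite divr_gt0 ?exprn_gt0.
have em_sum M : \sum_(m < M) em m = eps - eps / 2 ^+ M.
  elim: M => [|M IH]; first by rewrite big_ord0 expr0 divr1 subrr.
  by rewrite big_ord_recr IH /em /= exprS; field.
have [L LP] := choice (fun m => finite_null_seq (S_null m) (em_gt0 m)).
have L_neq0 m : (0 < size (L m))%N by case: (LP m).
pose G := concat_stream zero_box L.
have prefixP M p : proper_box (nth zero_box (concat_prefix L M) p).
  have [p_lt|p_ge] := ltnP p (size (concat_prefix L M)).
    rewrite -nth_concat_stream //; apply: concat_stream_ind => [|m q].
      exact: proper_zero_box.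
    by case: (LP m).
  by rewrite nth_default //; exact: proper_zero_box.
have G_cover x : (\bigcup_m S m) x -> exists n, in_box (G n) x.
  move=> [m _ Smx]; have [_ _ Scov _] := LP m; have [p p_lt xp] := Scov x Smx.
  by have [n Gn] := concat_stream_onto zero_box L_neq0 p_lt; exists n; rewrite /G Gn.
exists G; split=> [n||M]; [exact: prefixP | exact: G_cover |].
have size_prefix := size_concat_prefix L_neq0 M.
have -> : \sum_(n < M) box_volume (G n) =
          \sum_(b <- take M (concat_prefix L M)) box_volume b.
  rewrite (big_nth zero_box) size_takel // big_mkord; apply: eq_bigr => n _.
  by rewrite nth_take // /G (nth_concat_stream _ L_neq0 (M := M)) // (leq_trans _ size_prefix).
apply: (@le_lt_trans _ _ (\sum_(b <- concat_prefix L M) box_volume b)).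
  rewrite -[in leRHS](cat_take_drop M (concat_prefix L M)) big_cat lerDl.
  by rewrite (big_nth zero_box) big_mkord sumr_ge0 // => p _; rewrite nth_drop box_volume_ge0.
rewrite big_flatten /mkseq big_map -{1}(subn0 M) big_mkord.
apply: (@le_lt_trans _ _ (\sum_(m < M) em m)).
  by apply: ler_sum => m _; case: (LP m) => _ _ _ /ltW.
by rewrite em_sum ltrBlDr ltrDl divr_gt0 ?exprn_gt0.
Qed.

Lemma null_setS (S S' : set (I -> R)) : S `<=` S' -> null_set S' -> null_set S.
Proof.
move=> SS' S'_null eps /S'_null [b [bP S'cov bvol]].
by exists b; split=> // x /SS' /S'cov.
Qed.

Lemma null_set_bigcup (T : countType) (S : T -> set (I -> R)) :
  (forall t, finite_null (S t)) -> null_set (\bigcup_t S t).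
Proof.
move=> S_null; pose S' m := if pickle_inv m is Some t then S t else set0.
apply: (@null_setS _ (\bigcup_m S' m)).
  by move=> x [t _ Stx]; exists (pickle t) => //; rewrite /S' pickleK_inv.
apply: null_set_bigcup_nat => m; rewrite /S'.
by case: pickle_inv => [t|]; last exact: finite_null0.
Qed.

End BoxNull.

Section LipschitzImage.
Variable R : realType.

(* Cell indices are clipped at [s] so that [v = r] falls into the last cell. *)
Lemma grid_cell_close (r d v v' : R) (s : nat) : 0 < d -> r + r = s.+1%:R * d ->
  `|v| <= r -> `|v'| <= r ->
  minn (Num.Def.truncn ((v + r) / d)) s = minn (Num.Def.truncn ((v' + r) / d)) s ->
  `|v - v'| <= d.
Proof.
move=> d_gt0 rsd.
have cellP w : `|w| <= r -> let c := minn (Num.Def.truncn ((w + r) / d)) s in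
    c%:R * d <= w + r <= c%:R * d + d.
  move=> /ler_normlP [w_ge w_le] /=; set q := (w + r) / d.
  have qd : q * d = w + r by rewrite mulfVK // gt_eqF.
  have /andP [q_ge q_lt] := truncn_itv (divr_ge0 (ltac:(lra) : 0 <= w + r) (ltW d_gt0)).
  have [q_s|s_q] := leqP (Num.Def.truncn q) s.
    have e1 : (Num.Def.truncn q)%:R * d <= q * d by rewrite ler_pM2r.
    have e2 : q * d <= (Num.Def.truncn q).+1%:R * d by rewrite ler_pM2r // ltW.
    by rewrite -natr1 mulrDl mul1r in e2; apply/andP; lra.
  have e1 : s%:R * d <= q * d.
    by rewrite ler_pM2r //; apply: le_trans q_ge; rewrite ler_nat ltnW.
  rewrite -natr1 mulrDl mul1r in rsd; apply/andP; lra.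
move=> /cellP /andP [v_ge v_le] /cellP /andP [v'_ge v'_le] same.
rewrite same in v_ge v_le; rewrite ler_distl; apply/andP; lra.
Qed.

Lemma grid_volume_le (A : R) (s a b : nat) : 0 <= A -> (a < b)%N ->
  s.+1%:R ^+ a * (A / s.+1%:R) ^+ b <= A ^+ b / s.+1%:R.
Proof.
move=> A_ge0 ab; set S : R := s.+1%:R; have S_gt0 : 0 < S by rewrite ltr0n.
rewrite expr_div_n mulrCA ler_wpM2l ?exprn_ge0 //.
have -> : S ^+ a / S ^+ b = (S * S ^+ (b - a.+1))^-1.
  by rewrite -{1}(subnKC ab) exprD exprS; field; rewrite !expf_neq0 ?gt_eqF.
rewrite lef_pV2 ?posrE ?mulr_gt0 ?exprn_gt0 // ler_peMr ?(ltW S_gt0) //.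
by rewrite exprn_ege1 // ler1n.
Qed.

Variables I J : finType.

(* Cover each of the N^#|J| grid cells of side d = 2r/N by a box of side 2Kd around
   the image of one of its points; since #|J| < #|I| the total volume is O(1/N). *)
Lemma lipschitz_image_finite_null (P : (J -> R) -> (I -> R) -> Prop) (r K : R) :
  0 < r -> 0 <= K -> (#|J| < #|I|)%N ->
  (forall y x, P y x -> forall j, `|y j| <= r) ->
  (forall y x y' x' dl, 0 <= dl -> P y x -> P y' x' ->
     (forall j, `|y j - y' j| <= dl) -> forall t, `|x t - x' t| <= K * dl) ->
  finite_null [set x | exists y, P y x].
Proof.
move=> r_gt0 K_ge0 JI y_bnd P_lip eps eps_gt0.
pose A := (K + K) * (r + r).
have A_ge0 : 0 <= A by rewrite mulr_ge0 //; lra.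
pose s := Num.Def.truncn (A ^+ #|I| / eps).
pose d := (r + r) / s.+1%:R.
have d_gt0 : 0 < d by rewrite divr_gt0 ?ltr0n //; lra.
have rsd : r + r = s.+1%:R * d by rewrite mulrC divfK // pnatr_eq0.
pose cell (y : J -> R) : {ffun J -> 'I_s.+1} :=
  [ffun j => inord (minn (Num.Def.truncn ((y j + r) / d)) s)].
pose rep c := xget (0, 0) [set p | P p.1 p.2 /\ cell p.1 = c].
exists {ffun J -> 'I_s.+1}, (fun c =>
  ((fun t => (rep c).2 t - K * d), (fun t => (rep c).2 t + K * d))); split.
- have Kd_ge0 : 0 <= K * d by rewrite mulr_ge0 // ltW.
  by move=> c t /=; lra.
- move=> x [y Pyx]; exists (cell y).
  have [Prep cell_rep] : [set p | P p.1 p.2 /\ cell p.1 = cell y] (rep (cell y)).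
    by apply: xgetPex; exists (y, x).
  move=> t /=; rewrite -ler_distl; apply: (P_lip _ _ _ _ d (ltW d_gt0) Pyx Prep _ t) => j.
  apply: grid_cell_close d_gt0 rsd (y_bnd _ _ Pyx j) (y_bnd _ _ Prep j) _.
  have /(congr1 (fun c : {ffun J -> 'I_s.+1} => c j : nat)) := cell_rep.
  by rewrite /cell !ffunE !inordK ?ltnS ?geq_minr // => ->.
- have box_vol c : box_volume ((fun t => (rep c).2 t - K * d),
      (fun t => (rep c).2 t + K * d)) = (A / s.+1%:R) ^+ #|I|.
    rewrite /box_volume (eq_bigr (fun=> A / s.+1%:R)) ?prodr_const // => t _ /=.
    by rewrite /A /d; field; rewrite nat1r pnatr_eq0.
  under eq_bigr do rewrite box_vol.
  rewrite sumr_const card_ffun card_ord -(mulr_natr _ (s.+1 ^ #|J|)) natrX mulrC.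
  apply: le_lt_trans (grid_volume_le s A_ge0 JI) _.
  by rewrite ltr_pdivrMr ?ltr0n // mulrC -ltr_pdivrMr // truncnS_gt.
Qed.

End LipschitzImage.

Section Flatten.
Variables (R : realType) (k : nat) (rows cols : 'I_k -> nat).
Local Notation params := (mxfam R rows cols).

Definition mx_index := {i : 'I_k & ('I_(rows i) * 'I_(cols i))%type}.

Definition flat (B : params) : mx_index -> R :=
  fun t => B (tag t) (tagged t).1 (tagged t).2.

Definition unflat (x : mx_index -> R) : params :=
  fun i => \matrix_(r, c) x (Tagged _ (r, c)).

Lemma flatK : cancel flat unflat.
Proof.
move=> B; apply: functional_extensionality_dep => i; apply/matrixP => r c.
by rewrite mxE.
Qed.

Lemma box_vol_unflat (b : (mx_index -> R) * (mx_index -> R)) :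
  box_vol (unflat b.1) (unflat b.2) = box_volume b.
Proof.
pose F i (rc : 'I_(rows i) * 'I_(cols i)) := b.2 (Tagged _ rc) - b.1 (Tagged _ rc).
transitivity (\prod_(i < k) \prod_(rc : 'I_(rows i) * 'I_(cols i)) F i rc).
  by apply: eq_bigr => i _; rewrite pair_bigA; apply: eq_bigr => -[r c] _; rewrite !mxE.
by rewrite (sig_big_dep (fun _ => true) (fun i _ => true) F); apply: eq_bigr => -[].
Qed.

Lemma lebesgue_null_flat (A : set params) (S : set (mx_index -> R)) :
  (forall B, A B -> S (flat B)) -> null_set S -> lebesgue_null A.
Proof.
move=> AS S_null eps /S_null [b [bP Scov Svol]].
exists (fun n => unflat (b n).1), (fun n => unflat (b n).2); split.
- by move=> n i r c; rewrite !mxE; exact: bP.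
- move=> B /AS /Scov [n Bn]; exists n => i r c; rewrite !mxE; exact: Bn.
- by move=> M; under eq_bigr do rewrite box_vol_unflat.
Qed.

End Flatten.

Section MatrixNorm.
Variable R : realType.

Lemma mxentry_le_norm m n (A : 'M[R]_(m, n)) i j : `|A i j| <= `|A|.
Proof.
by rewrite [leRHS]/Num.Def.normr /= mx_normrE; apply/bigmax_geP; right; exists (i, j).
Qed.

Lemma mx_norm_le m n (A : 'M[R]_(m, n)) c :
  0 <= c -> (forall i j, `|A i j| <= c) -> `|A| <= c.
Proof.
by move=> c_ge0 Ac; rewrite /Num.Def.normr /= mx_normrE; apply: bigmax_le => // -[i j].
Qed.

Lemma mx_norm_row m n (A : 'M[R]_(m, n)) i : `|row i A| <= `|A|.
Proof. by apply: mx_norm_le => // j c; rewrite mxE mxentry_le_norm. Qed.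

Lemma mx_norm_mulmx m n p (A : 'M[R]_(m, n)) (u : 'M[R]_(n, p)) :
  `|A *m u| <= n%:R * (`|A| * `|u|).
Proof.
apply: mx_norm_le => [|i l]; first by rewrite !mulr_ge0.
rewrite mxE; apply: le_trans (ler_norm_sum _ _ _) _.
rewrite mulr_natl -[n in _ *+ n](card_ord n) -sumr_const; apply: ler_sum => j _.
by rewrite normrM ler_pM ?mxentry_le_norm.
Qed.

Lemma mx_norm_mulmxB m n p (A A' : 'M[R]_(m, n)) (u u' : 'M[R]_(n, p)) :
  `|A *m u - A' *m u'| <= n%:R * (`|A - A'| * `|u| + `|A'| * `|u - u'|).
Proof.
have -> : A *m u - A' *m u' = (A - A') *m u + A' *m (u - u') .
  by rewrite mulmxBl mulmxBr addrA subrK.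
by rewrite mulrDr; apply: le_trans (ler_normD _ _) (lerD _ _); exact: mx_norm_mulmx.
Qed.

Lemma relu_vec_lipschitz h : 1.-lipschitz (@relu_vec R h).
Proof.
move=> [u v] _ /=; rewrite mul1r; apply: mx_norm_le => // i j.
apply: le_trans (mxentry_le_norm _ i j); rewrite !mxE.
set x := u i j; set y := v i j.
have n1 := ler_norm (x - y); have n2 : - (x - y) <= `|x - y| by rewrite -normrN ler_norm.
have [x0|x0] := lerP x 0; have [y0|y0] := lerP y 0;
  rewrite ?(max_r x0) ?(max_r y0) ?(max_l (ltW x0)) ?(max_l (ltW y0)) ler_norml;
  apply/andP; split; lra.
Qed.

Lemma klipschitz_le (V W : normedModType R) (f : V -> W) L :
  L.-lipschitz f -> forall u v, `|f u - f v| <= L * `|u - v|.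
Proof. by move=> f_lip u v; exact: (f_lip (u, v)). Qed.

Lemma klipschitz_normr_le (V W : normedModType R) (f : V -> W) L :
  L.-lipschitz f -> forall u, `|f u| <= L * `|u| + `|f 0|.
Proof.
move=> /klipschitz_le f_lip u; rewrite -[f u](subrK (f 0)).
apply: le_trans (ler_normD _ _) _; rewrite lerD2r.
by apply: le_trans (f_lip u 0) _; rewrite subr0.
Qed.

Lemma relu_net_lipschitz a b (N : relu_net R a b) :
  exists2 L, 0 <= L & L.-lipschitz (net_eval N).
Proof.
have W_lip a' b' (W : 'M[R]_(b', a')) u v : `|W *m u - W *m v| <= a'%:R * `|W| * `|u - v|.
  by rewrite -mulmxBr -mulrA mx_norm_mulmx.
elim: N => [a' b' W | a' h b' W bias N' [L L_ge0 N'_lip]] /=.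
  by exists (a'%:R * `|W|) => [|[u v] _ /=]; [rewrite mulr_ge0 | exact: W_lip].
exists (L * (a'%:R * `|W|)) => [|[u v] _ /=]; first by rewrite !mulr_ge0.
apply: le_trans (klipschitz_le N'_lip _ _) _; rewrite -mulrA ler_wpM2l //.
apply: le_trans (klipschitz_le (@relu_vec_lipschitz _) _ _) _; rewrite mul1r.
by rewrite opprD addrACA subrr addr0 W_lip.
Qed.

End MatrixNorm.

Section SolvedEntry.
Variable R : realType.

Lemma normr_mulB (a a' b b' : R) :
  `|a * b - a' * b'| <= `|a - a'| * `|b| + `|a'| * `|b - b'|.
Proof.
have -> : a * b - a' * b' = (a - a') * b + a' * (b - b') by ring.
by rewrite -!normrM ler_normD.
Qed.

Lemma normr_sum_le p (P : pred 'I_p) (F : 'I_p -> R) C : 0 <= C ->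
  (forall c, P c -> `|F c| <= C) -> `|\sum_(c | P c) F c| <= p%:R * C.
Proof.
move=> C_ge0 FC; apply: le_trans (ler_norm_sum _ _ _) _.
apply: le_trans (ler_sum _ FC) _; rewrite sumr_const mulr_natl.
by apply: ler_wpMn2l => //; rewrite -[p in (_ <= p)%N](card_ord p) max_card.
Qed.

Lemma solve_entry p (a : 'rV[R]_p) (u : 'cV[R]_p) c0 : u c0 0 != 0 -> a *m u = 0 ->
  a 0 c0 = - ((\sum_(c | c != c0) a 0 c * u c 0) / u c0 0).
Proof.
move=> u0 /(congr1 (fun v : 'M[R]_1 => v 0 0)); rewrite !mxE (bigD1 c0) //=.
by move=> /eqP; rewrite addr_eq0 => /eqP au; rewrite -mulNr -au mulfK.
Qed.

Lemma neq0_of_inv_le (rho v : R) : 0 < rho -> rho^-1 <= `|v| -> v != 0.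
Proof.
by move=> rho_gt0 v_ge; rewrite -normr_gt0; apply: lt_le_trans v_ge; rewrite invr_gt0.
Qed.

Lemma normr_divB (rho s s' v v' : R) : 0 < rho ->
  rho^-1 <= `|v| -> rho^-1 <= `|v'| ->
  `|s / v - s' / v'| <= rho * rho * `|v - v'| * `|s| + rho * `|s - s'|.
Proof.
move=> rho_gt0 v_ge v'_ge.
have inv_le (w : R) : rho^-1 <= `|w| -> `|w^-1| <= rho.
  move=> w_ge; have w_gt0 : 0 < `|w| by apply: lt_le_trans w_ge; rewrite invr_gt0.
  by rewrite normfV -[rho]invrK lef_pV2 ?posrE ?invr_gt0.
rewrite (mulrC s) (mulrC s'); apply: le_trans (normr_mulB _ _ _ _) _.
apply: lerD; last by rewrite ler_wpM2r ?inv_le.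
rewrite ler_wpM2r //.
have -> : v^-1 - v'^-1 = (v' - v) * (v^-1 * v'^-1).
  by field; rewrite !(neq0_of_inv_le rho_gt0).
rewrite normrM normrM distrC mulrC ler_wpM2r //.
by apply: ler_pM; rewrite ?inv_le.
Qed.

Lemma solved_entry_lipschitz p (c0 : 'I_p) (rho Mu Ku : R) :
  0 < rho -> 0 <= Mu -> 0 <= Ku ->
  exists2 K, 0 <= K & forall (a a' : 'rV[R]_p) (u u' : 'cV[R]_p) dl, 0 <= dl ->
    `|a| <= rho -> `|a'| <= rho -> `|u| <= Mu -> `|u - u'| <= Ku * dl ->
    rho^-1 <= `|u c0 0| -> rho^-1 <= `|u' c0 0| -> a *m u = 0 -> a' *m u' = 0 ->
    (forall c, c != c0 -> `|a 0 c - a' 0 c| <= dl) ->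
    `|a 0 c0 - a' 0 c0| <= K * dl.
Proof.
move=> rho_gt0 Mu_ge0 Ku_ge0; have rho_ge0 := ltW rho_gt0.
pose Ms := p%:R * (rho * Mu); pose Md := p%:R * (Mu + rho * Ku).
have Ms_ge0 : 0 <= Ms by rewrite !mulr_ge0.
have Md_ge0 : 0 <= Md by rewrite mulr_ge0 ?addr_ge0 ?mulr_ge0.
have rrK_ge0 : 0 <= rho * rho * Ku by rewrite mulr_ge0 // mulr_ge0.
exists (rho * rho * Ku * Ms + rho * Md); first by apply: addr_ge0; rewrite mulr_ge0.
move=> a a' u u' dl dl_ge0 a_le a'_le u_le uu' u_ge u'_ge au a'u' aa'.
have entry_le (A : 'M[R]_(1, p)) c : `|A| <= rho -> `|A 0 c| <= rho.
  by move=> /(le_trans (mxentry_le_norm A 0 c)).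
have u_entry_le c : `|u c 0| <= Mu := le_trans (mxentry_le_norm u c 0) u_le.
have uu'_entry c : `|u c 0 - u' c 0| <= Ku * dl.
  by apply: le_trans uu'; have := mxentry_le_norm (u - u') c 0; rewrite !mxE.
rewrite (solve_entry (neq0_of_inv_le rho_gt0 u_ge) au).
rewrite (solve_entry (neq0_of_inv_le rho_gt0 u'_ge) a'u').
set S := \sum_(c | _) _; set S' := \sum_(c | _) _.
have S_le : `|S| <= Ms.
  apply: normr_sum_le => [|c _]; first by rewrite mulr_ge0.
  by rewrite normrM; apply: ler_pM; rewrite ?entry_le.
have SS' : `|S - S'| <= Md * dl.
  rewrite -mulrA -sumrB; apply: normr_sum_le => [|c c0c].
    by apply: mulr_ge0 => //; apply: addr_ge0 => //; exact: mulr_ge0.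
  apply: le_trans (normr_mulB _ _ _ _) _; rewrite mulrDl -mulrA [Mu * dl]mulrC.
  by apply: lerD; apply: ler_pM; rewrite ?aa' ?entry_le.
rewrite -opprD normrN; apply: le_trans (normr_divB _ _ rho_gt0 u_ge u'_ge) _.
have -> : (rho * rho * Ku * Ms + rho * Md) * dl = rho * rho * (Ku * dl) * Ms + rho * (Md * dl).
  by ring.
apply: lerD; last by rewrite ler_wpM2l.
by rewrite -!mulrA ler_wpM2l // ler_wpM2l // mulrA ler_pM ?normr_ge0 ?uu'_entry.
Qed.

End SolvedEntry.

(* Keeps the block index of [f] explicit inside the section. *)
Unset Implicit Arguments.

Section BlockComposition.
Variables (R : realType) (k : nat) (d : nat -> nat)
  (f : forall i : 'I_k, 'cV[R]_(d (i.*2)) -> 'cV[R]_(d (i.*2).+1)).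
Local Notation params := (forall i : 'I_k, 'M[R]_(d (i.+1).*2, d (i.*2).+1)).

Lemma comp_blocksS (B : params) i (hi : (i < k)%N) (x : 'cV[R]_(d 0)) :
  comp_blocks f B hi x = B (Ordinal hi) *m f (Ordinal hi) (comp_blocks f B (ltnW hi) x).
Proof. by []. Qed.

Lemma comp_blocks_irr (B : params) i (hi hi' : (i <= k)%N) (x : 'cV[R]_(d 0)) :
  comp_blocks f B hi x = comp_blocks f B hi' x.
Proof. by rewrite (bool_irrelevance hi hi'). Qed.

Definition block_input (B : params) (i0 : 'I_k) (x : 'cV[R]_(d 0)) :=
  comp_blocks f B (ltnW (ltn_ord i0)) x.

Definition collision_gap (B : params) i0 x y :=
  f i0 (block_input B i0 x) - f i0 (block_input B i0 y).

Lemma comp_blocks_collision (B : params) (x y : 'cV[R]_(d 0)) i (hi : (i <= k)%N) :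
  comp_blocks f B hi x = comp_blocks f B hi y -> x = y \/
  exists i0 : 'I_k, block_input B i0 x <> block_input B i0 y /\
    B i0 *m f i0 (block_input B i0 x) = B i0 *m f i0 (block_input B i0 y).
Proof.
elim: i hi => [|i IH] hi; first by left.
rewrite !comp_blocksS => eq_out.
have [eq_in|neq_in] := pselect (comp_blocks f B (ltnW hi) x = comp_blocks f B (ltnW hi) y).
  exact: IH eq_in.
by right; exists (Ordinal hi); rewrite /block_input !(comp_blocks_irr B i _ (ltnW hi)).
Qed.

Lemma not_injective_collision (B : params) : (forall i, injective (f i)) ->
  ~ injective (Fk f B) ->
  exists i0 x y, collision_gap B i0 x y != 0 /\ B i0 *m collision_gap B i0 x y = 0.
Proof.
move=> f_inj /existsNP [x /existsNP [y /not_implyP [eq_out neq]]].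
have [//|[i0 [neq_in eq_B]]] := comp_blocks_collision B x y k (leqnn k) eq_out.
exists i0, x, y; split; last by rewrite /collision_gap mulmxBr eq_B subrr.
by apply: contra_notN neq_in; rewrite subr_eq0 => /eqP /f_inj.
Qed.

Hypothesis f_lip : forall i, exists2 L, 0 <= L & L.-lipschitz (f i).

Lemma comp_blocks_lipschitz i (hi : (i <= k)%N) (rho : R) : 0 <= rho ->
  exists M K : R, [/\ 0 <= M, 0 <= K & forall (B B' : params) (x x' : 'cV_(d 0)) dl,
    (forall j, `|B j| <= rho) -> (forall j, `|B' j| <= rho) ->
    `|x| <= rho -> (forall j : 'I_k, (j < i)%N -> `|B j - B' j| <= dl) -> `|x - x'| <= dl ->
    `|comp_blocks f B hi x| <= M /\
    `|comp_blocks f B hi x - comp_blocks f B' hi x'| <= K * dl].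
Proof.
move=> rho_ge0; elim: i hi => [|i IH] hi.
  by exists rho, 1; split=> // B B' x x' dl *; rewrite mul1r.
have [M [K [M_ge0 K_ge0 comp_lip]]] := IH (ltnW hi).
have [L L_ge0 fi_lip] := f_lip (Ordinal hi).
pose Mf := L * M + `|f (Ordinal hi) 0|.
have Mf_ge0 : 0 <= Mf by rewrite addr_ge0 ?mulr_ge0.
pose p := (d (i.*2).+1)%:R : R.
exists (p * (rho * Mf)), (p * (Mf + rho * (L * K))).
split; rewrite ?mulr_ge0 ?addr_ge0 ?mulr_ge0 //.
move=> B B' x x' dl B_le B'_le x_le BB' xx'.
have BB'_i : forall j : 'I_k, (j < i)%N -> `|B j - B' j| <= dl.
  by move=> j /ltnW; exact: BB'.
have [w_le ww'] := comp_lip _ _ _ _ _ B_le B'_le x_le BB'_i xx'.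
have fw_le w : `|w| <= M -> `|f (Ordinal hi) w| <= Mf.
  move=> w_M; apply: le_trans (klipschitz_normr_le fi_lip w) _.
  by rewrite lerD2r ler_wpM2l.
rewrite !comp_blocksS; split.
  apply: le_trans (mx_norm_mulmx _ _) _; rewrite ler_wpM2l //.
  apply: ler_pM; rewrite ?normr_ge0 //; [exact: (B_le (Ordinal hi)) | exact: fw_le].
apply: le_trans (mx_norm_mulmxB _ _ _ _) _; rewrite -mulrA ler_wpM2l //.
rewrite mulrDl -mulrA [Mf * dl]mulrC; apply: lerD.
  apply: ler_pM; rewrite ?normr_ge0 //; last exact: fw_le.
  exact: (BB' (Ordinal hi) (ltnSn i)).
apply: ler_pM; rewrite ?normr_ge0 //; first exact: (B'_le (Ordinal hi)).
by apply: le_trans (klipschitz_le fi_lip _ _) _; rewrite -mulrA ler_wpM2l.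
Qed.

Lemma collision_gap_lipschitz (i0 : 'I_k) (rho : R) : 0 <= rho ->
  exists Mu Ku : R, [/\ 0 <= Mu, 0 <= Ku & forall (B B' : params) (x y x' y' : 'cV_(d 0)) dl,
    (forall j, `|B j| <= rho) -> (forall j, `|B' j| <= rho) ->
    `|x| <= rho -> `|y| <= rho -> (forall j : 'I_k, (j < i0)%N -> `|B j - B' j| <= dl) ->
    `|x - x'| <= dl -> `|y - y'| <= dl ->
    `|collision_gap B i0 x y| <= Mu /\
    `|collision_gap B i0 x y - collision_gap B' i0 x' y'| <= Ku * dl].
Proof.
move=> rho_ge0.
have [M [K [M_ge0 K_ge0 comp_lip]]] := comp_blocks_lipschitz _ (ltnW (ltn_ord i0)) _ rho_ge0.
have [L L_ge0 fi_lip] := f_lip i0.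
pose Mf := L * M + `|f i0 0|.
exists (Mf + Mf), (L * K + L * K); split; rewrite ?addr_ge0 ?mulr_ge0 //.
move=> B B' x y x' y' dl B_le B'_le x_le y_le BB' xx' yy'.
have [wx_le wxx'] := comp_lip _ _ _ _ _ B_le B'_le x_le BB' xx'.
have [wy_le wyy'] := comp_lip _ _ _ _ _ B_le B'_le y_le BB' yy'.
have fw_le w : `|w| <= M -> `|f i0 w| <= Mf.
  move=> w_M; apply: le_trans (klipschitz_normr_le fi_lip w) _.
  by rewrite lerD2r ler_wpM2l.
have fww' w w' : `|w - w'| <= K * dl -> `|f i0 w - f i0 w'| <= L * K * dl.
  by move=> ww'; apply: le_trans (klipschitz_le fi_lip _ _) _; rewrite -mulrA ler_wpM2l.
rewrite /collision_gap /block_input; split.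
  by apply: le_trans (ler_normB _ _) _; apply: lerD; apply: fw_le.
set fx := f i0 _; set fy := f i0 _; set fx' := f i0 _; set fy' := f i0 _.
rewrite opprB (addrC fy') addrACA (addrC (- fy)) -opprB mulrDl.
apply: le_trans (ler_normD _ _) _; rewrite normrN (distrC fx') (distrC fy').
by apply: lerD; apply: fww'.
Qed.

Definition collision_at (i0 : 'I_k) (c0 : 'I_(d (i0.*2).+1)) (rho : R) (B : params)
    (x y : 'cV[R]_(d 0)) : Prop :=
  [/\ forall j, `|B j| <= rho, `|x| <= rho, `|y| <= rho,
      rho^-1 <= `|collision_gap B i0 x y c0 0| & B i0 *m collision_gap B i0 x y = 0].

Lemma not_injective_collision_at (B : params) : (forall i, injective (f i)) ->
  ~ injective (Fk f B) -> exists i0 c0 (m : nat) x y, collision_at i0 c0 m.+1%:R B x y.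
Proof.
move=> f_inj /(not_injective_collision _ f_inj) [i0 [x [y [/matrix0Pn [c0 [j0]]]]]].
rewrite (ord1 j0) => gap_neq0 gap_ker.
set g := `|collision_gap B i0 x y c0 0|.
pose T := \sum_j `|B j| + `|x| + `|y| + g^-1.
exists i0, c0, (Num.Def.truncn T), x, y.
have T_lt := truncnS_gt T; set rho := (Num.Def.truncn T).+1%:R in T_lt *.
rewrite /T in T_lt.
have B_sum j : `|B j| <= \sum_j `|B j| by rewrite (bigD1 j) //= lerDl sumr_ge0.
have sum_ge0 : 0 <= \sum_j `|B j| by rewrite sumr_ge0.
have g_gt0 : 0 < g by rewrite normr_gt0.
have ginv_gt0 : 0 < g^-1 by rewrite invr_gt0.
have x_ge0 := normr_ge0 x; have y_ge0 := normr_ge0 y.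
split=> //; [by move=> j; have := B_sum j; lra | lra | lra |].
by rewrite -/g -[g]invrK lef_pV2 ?posrE ?invr_gt0 ?ltr0n //; lra.
Qed.

Lemma solved_column_lipschitz (i0 : 'I_k) (c0 : 'I_(d (i0.*2).+1)) (rho : R) : 0 < rho ->
  exists2 K, 0 <= K & forall (B B' : params) (x y x' y' : 'cV_(d 0)) dl, 0 <= dl ->
    collision_at i0 c0 rho B x y -> collision_at i0 c0 rho B' x' y' ->
    (forall j : 'I_k, (j < i0)%N -> `|B j - B' j| <= dl) ->
    `|x - x'| <= dl -> `|y - y'| <= dl ->
    (forall r c, c != c0 -> `|B i0 r c - B' i0 r c| <= dl) ->
    forall r, `|B i0 r c0 - B' i0 r c0| <= K * dl.
Proof.
move=> rho_gt0.
have [Mu [Ku [Mu_ge0 Ku_ge0 gap_lip]]] := collision_gap_lipschitz i0 rho (ltW rho_gt0).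
have [K K_ge0 entry_lip] := solved_entry_lipschitz c0 rho_gt0 Mu_ge0 Ku_ge0.
exists K => // B B' x y x' y' dl dl_ge0 [B_le x_le y_le g_ge gB] [B'_le _ _ g'_ge gB'].
move=> BB' xx' yy' col_close r.
have [g_le gg'] := gap_lip _ _ _ _ _ _ _ B_le B'_le x_le y_le BB' xx' yy'.
have := entry_lip (row r (B i0)) (row r (B' i0)) _ _ _ dl_ge0 _ _ g_le gg' g_ge g'_ge.
rewrite !mxE; apply; rewrite -?row_mul ?gB ?gB' ?row0 //.
- exact: le_trans (mx_norm_row _ _) (B_le i0).
- exact: le_trans (mx_norm_row _ _) (B'_le i0).
- by move=> c c_neq; rewrite !mxE; exact: col_close.
Qed.

Local Notation index :=
  (mx_index (fun i : 'I_k => d (i.+1).*2) (fun i : 'I_k => d (i.*2).+1)).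

Definition in_column (i0 : 'I_k) (c0 : 'I_(d (i0.*2).+1)) : pred index :=
  fun t => (tag t == i0) && ((tagged t).2 == c0 :> nat).

(* A point of the piece (i0, c0, rho) is recorded by all parameter entries off
   column c0 of block i0 together with the two colliding inputs. *)
Local Notation param_index i0 c0 :=
  ({t : index | ~~ in_column i0 c0 t} + ('I_(d 0) + 'I_(d 0)))%type.

Definition collision_param (i0 : 'I_k) (c0 : 'I_(d (i0.*2).+1)) (rho : R)
    (y : param_index i0 c0 -> R) (x : index -> R) :=
  collision_at i0 c0 rho (unflat x) (\col_l y (inr (inl l))) (\col_l y (inr (inr l))) /\
  forall t, y (inl t) = x (val t).

Lemma collision_param_bounded i0 c0 rho y x :
  collision_param i0 c0 rho y x -> forall j, `|y j| <= rho.
Proof.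
move=> [[B_le x_le y_le _ _] yx] [[[i [r c]] nt]|[l|l]].
- rewrite yx /=; apply: le_trans (B_le i).
  by have := mxentry_le_norm (unflat x i) r c; rewrite mxE.
- by apply: le_trans x_le; have := mxentry_le_norm (\col_l y (inr (inl l))) l 0; rewrite mxE.
- by apply: le_trans y_le; have := mxentry_le_norm (\col_l y (inr (inr l))) l 0; rewrite mxE.
Qed.

Lemma collision_param_lipschitz (i0 : 'I_k) (c0 : 'I_(d (i0.*2).+1)) (rho : R) : 0 < rho ->
  exists2 K, 0 <= K & forall y x y' x' dl, 0 <= dl ->
    collision_param i0 c0 rho y x -> collision_param i0 c0 rho y' x' ->
    (forall j, `|y j - y' j| <= dl) -> forall t, `|x t - x' t| <= K * dl.
Proof.
move=> rho_gt0; have [K K_ge0 col_lip] := solved_column_lipschitz i0 c0 rho rho_gt0.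
exists (1 + K); first by rewrite addr_ge0.
move=> y x y' x' dl dl_ge0 [col yx] [col' yx'] yy'.
have off_col t : ~~ in_column i0 c0 t -> `|x t - x' t| <= dl.
  by move=> nt; have := yy' (inl (exist _ t nt)); rewrite yx yx'.
have vec_close (g : 'I_(d 0) -> 'I_(d 0) + 'I_(d 0)) :
    `|\col_l y (inr (g l)) - \col_l y' (inr (g l))| <= dl.
  by apply: mx_norm_le => // l j; rewrite !mxE; exact: yy'.
have Kdl_ge0 := mulr_ge0 K_ge0 dl_ge0.
move=> [i [r c]]; rewrite mulrDl mul1r.
have [/andP [/eqP /= i_eq /eqP /= c_eq]|nt] := boolP (in_column i0 c0 (Tagged _ (r, c))).
  subst i; have -> : c = c0 by apply: val_inj.
  have blocks_close (j : 'I_k) : (j < i0)%N -> `|unflat x j - unflat x' j| <= dl.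
    move=> ji; apply: mx_norm_le => // r' c'; rewrite !mxE; apply: off_col.
    by apply/negP => /andP [/eqP /= ji0 _]; rewrite ji0 ltnn in ji.
  have row_close r' c' : c' != c0 -> `|unflat x i0 r' c' - unflat x' i0 r' c'| <= dl.
    move=> c'_neq; rewrite !mxE; apply: off_col.
    by apply/negP => /andP [_ /eqP /= /val_inj c'_eq]; rewrite c'_eq eqxx in c'_neq.
  have := col_lip _ _ _ _ _ _ _ dl_ge0 col col' blocks_close (vec_close inl) (vec_close inr)
    row_close r.
  by rewrite !mxE; lra.
by have := off_col _ nt; lra.
Qed.

Lemma card_in_column (i0 : 'I_k) (c0 : 'I_(d (i0.*2).+1)) :
  (d (i0.+1).*2 <= #|in_column i0 c0|)%N.
Proof.
pose g (r : 'I_(d (i0.+1).*2)) : index := Tagged _ ((r, c0) : 'I_(d (i0.+1).*2) * _).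
have g_inj : injective g by move=> r r' /(congr1 (fun t : index => val (tagged t).1)) /val_inj.
rewrite -[X in (X <= _)%N](card_ord (d (i0.+1).*2)) -(card_imset _ g_inj).
apply: subset_leq_card; apply/fintype.subsetP => _ /imsetP [r _ ->].
by rewrite unfold_in /in_column /= !eqxx.
Qed.

Lemma card_param_index (i0 : 'I_k) (c0 : 'I_(d (i0.*2).+1)) :
  (d 0 + d 0 < d (i0.+1).*2)%N -> (#|{: param_index i0 c0}| < #|{: index}|)%N.
Proof.
move=> dd; rewrite !card_sum !card_ord card_sig -(cardC (in_column i0 c0)) addnC ltn_add2r.
exact: leq_trans dd (card_in_column i0 c0).
Qed.

Lemma collision_piece_finite_null (i0 : 'I_k) (c0 : 'I_(d (i0.*2).+1)) (rho : R) :
  0 < rho -> (d 0 + d 0 < d (i0.+1).*2)%N ->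
  finite_null [set x | exists y, collision_param i0 c0 rho y x].
Proof.
move=> rho_gt0 dd; have [K K_ge0 param_lip] := collision_param_lipschitz i0 c0 rho rho_gt0.
exact: lipschitz_image_finite_null rho_gt0 K_ge0 (card_param_index i0 c0 dd)
  (@collision_param_bounded i0 c0 rho) param_lip.
Qed.

Lemma not_injective_params_null : (0 < k)%N ->
  (forall i : 'I_k, (d 0 + d 0 < d (i.+1).*2)%N) -> (forall i : 'I_k, (0 < d (i.*2).+1)%N) ->
  (forall i, injective (f i)) ->
  lebesgue_null [set B : mxfam R (fun i : 'I_k => d (i.+1).*2) (fun i : 'I_k => d (i.*2).+1) |
                 ~ injective (Fk f B)].
Proof.
move=> k_gt0 rows_large cols_gt0 f_inj.
have index_gt0 : (0 < #|{: index}|)%N.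
  pose i := Ordinal k_gt0; pose r := Ordinal (leq_ltn_trans (leq0n _) (rows_large i)).
  by apply/card_gt0P; exists (Tagged (fun j : 'I_k => ('I_(d (j.+1).*2) * 'I_(d (j.*2).+1))%type)
    (r, Ordinal (cols_gt0 i))).
pose Q := ({i0 : 'I_k & 'I_(d (i0.*2).+1)} * nat)%type.
apply: (lebesgue_null_flat (S := \bigcup_(q : Q)
  [set x | exists y, collision_param (tag q.1) (tagged q.1) q.2.+1%:R y x])).
  move=> B /(not_injective_collision_at B f_inj) [i0 [c0 [m [x [y col]]]]].
  exists (Tagged (fun i0 : 'I_k => 'I_(d (i0.*2).+1)) c0, m) => //=.
  exists (fun j => match j with
                   | inl t => flat B (val t) | inr (inl l) => x l 0 | inr (inr l) => y l 0
                   end); split => //.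
  have col_id (v : 'cV[R]_(d 0)) : \col_l v l 0 = v.
    by apply/matrixP => l j; rewrite mxE (ord1 j).
  by rewrite /= !col_id flatK.
apply: null_set_bigcup => // q.
by apply: collision_piece_finite_null; rewrite ?ltr0n ?rows_large.
Qed.

End BlockComposition.

Theorem corollary2 (R : realType) (n m k : nat) (d : nat -> nat)
    (hdpos : forall j, (j <= k.*2)%N -> (0 < d j)%N)
    (hd0 : d 0%N = n) (hdk : d (k.*2) = m) (hm : (n.*2.+1 <= m)%N)
    (hdeven : forall j, ~~ odd j -> (2 <= j)%N -> (j <= k.*2)%N -> (n.*2.+1 <= d j)%N)
    (f : forall i : 'I_k, 'cV[R]_(d (i.*2)) -> 'cV[R]_(d (i.*2).+1))
    (hfnet : forall i, is_relu_net (f i))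
    (hfinj : forall i, injective (f i))
    (dO : measure_display) (Omega : measurableType dO) (P : probability Omega R)
    (B : Omega -> forall i : 'I_k, 'M[R]_(d (i.+1).*2, d (i.*2).+1))
    (hB_ac : forall A : set (mxfam R (fun i : 'I_k => d (i.+1).*2)
                                      (fun i : 'I_k => d (i.*2).+1)),
        lebesgue_null A -> P.-negligible (B @^-1` A)) :
  {ae P, forall w, injective (Fk f (B w))}.
Proof.
subst n.
have f_lip i : exists2 L, 0 <= L & L.-lipschitz (f i).
  have [N fN] := hfnet i; have [L L_ge0 N_lip] := relu_net_lipschitz N.
  by exists L => // -[u v] _ /=; rewrite !fN; exact: klipschitz_le N_lip u v.
have [k0|k_gt0] := posnP k.
  apply: aeW => w; apply: contrapT.
  move=> /(not_injective_collision_at _ _ _ _ (B w) hfinj) [[i0 i0_lt] _].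
  by rewrite k0 in i0_lt.
have rows_large (i : 'I_k) : (d 0 + d 0 < d (i.+1).*2)%N.
  by rewrite addnn; apply: hdeven; rewrite ?odd_double ?leq_double.
have cols_gt0 (i : 'I_k) : (0 < d (i.*2).+1)%N by apply: hdpos; rewrite ltn_double.
apply: negligibleS _ (hB_ac _ (not_injective_params_null _ _ _ f f_lip k_gt0 rows_large
  cols_gt0 hfinj)).
by move=> w.
Qed.
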